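(* Let $\rho>0$, $r>0$ and $(x_0,y_0,\theta_0)\in\mathbb{R}^2\times[0,2\pi]$, and consider the optimal control problem (OCP) of finding the minimum time $t_f>0$ such that there is a trajectory $(x(\cdot),y(\cdot),\theta(\cdot))$ on $[0,t_f]$ of $\dot x=\cos\theta$, $\dot y=\sin\theta$, $\dot\theta=u/\rho$, $u(t)\in[-1,1]$, with $(x(0),y(0),\theta(0))=(x_0,y_0,\theta_0)$, $x(t_f)^2+y(t_f)^2=r^2$ and $x(t_f)\cos\theta(t_f)+y(t_f)\sin\theta(t_f)=0$. Suppose the solution path is of type $C_1S_2C_3$. Then: (1) if $\rho\ge r/2$, the circular arc $C_3$ and the target circle are externally tangent to each other; (2) if $\rho<r/2$, the center of the target circle does not lie in the interior of the circle (of radius $\rho$) coinciding with $C_1$.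
   Context: The target circle is the circle of radius $r$ centered at the origin. A solution path is a minimum-time trajectory of the OCP. Type $C_1S_2C_3$ means the path is the concatenation of a circular arc $C_1$ of radius $\rho$ (left- or right-turning), a straight line segment $S_2$ of positive length, and a circular arc $C_3$ of radius $\rho$. ''$C_3$ and the target circle are externally tangent'' means the circle of radius $\rho$ containing $C_3$ touches the target circle from outside (center distance $r+\rho$). *)

From Stdlib Require Import Reals Lra.
From Coquelicot Require Import Coquelicot.
Open Scope R_scope.

(* An admissible trajectory of the Dubins-type control system
     x' = cos th, y' = sin th, th' = u/rho, |u| <= 1,
   on [0, tf], starting at (x0,y0,th0) and ending on the target manifold
   x^2 + y^2 = r^2, x cos th + y sin th = 0.
   The control condition (th absolutely continuous with th' = u/rho a.e.,
   u measurable with values in [-1,1]) is stated in its equivalent form: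
   th is (1/rho)-Lipschitz on [0,tf]. *)
Definition admissible (rho r x0 y0 th0 : R) (x y th : R -> R) (tf : R) : Prop :=
  0 < tf /\
  x 0 = x0 /\ y 0 = y0 /\ th 0 = th0 /\
  (forall t s, 0 <= t <= tf -> 0 <= s <= tf ->
     Rabs (th t - th s) <= Rabs (t - s) / rho) /\
  (forall t, 0 <= t <= tf ->
     x t = x0 + RInt (fun s => cos (th s)) 0 t /\
     y t = y0 + RInt (fun s => sin (th s)) 0 t) /\
  (x tf) ^ 2 + (y tf) ^ 2 = r ^ 2 /\
  x tf * cos (th tf) + y tf * sin (th tf) = 0.

Definition optimal (rho r x0 y0 th0 : R) (x y th : R -> R) (tf : R) : Prop :=
  admissible rho r x0 y0 th0 x y th tf /\
  forall (x' y' th' : R -> R) (tf' : R),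
    admissible rho r x0 y0 th0 x' y' th' tf' -> tf <= tf'.

(* The path is of type C1 S2 C3: arc with control s1 (= +1 left, -1 right)
   on [0,t1], straight segment on [t1,t2], arc with control s3 on [t2,tf],
   all three pieces of positive length. *)
Definition is_CSC (rho th0 : R) (th : R -> R) (tf t1 t2 s1 s3 : R) : Prop :=
  0 < t1 /\ t1 < t2 /\ t2 < tf /\
  (s1 = 1 \/ s1 = -1) /\ (s3 = 1 \/ s3 = -1) /\
  (forall t, 0 <= t <= t1 -> th t = th0 + s1 * t / rho) /\
  (forall t, t1 <= t <= t2 -> th t = th t1) /\
  (forall t, t2 <= t <= tf -> th t = th t2 + s3 * (t - t2) / rho).

Definition turn_center_x (rho s px phi : R) : R := px - s * rho * sin phi.
Definition turn_center_y (rho s py phi : R) : R := py + s * rho * cos phi.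

(* If the line carrying the straight segment of an optimal C1 S2 C3 path missed
   the origin, one could rotate the final arc about the origin by a small angle
   and reconnect it to C1 along a common tangent: the end state still satisfies
   the rotation-invariant terminal conditions, and the travel time changes to
   first order by the signed distance from that line to the origin, so a
   rotation of the right sign would save time.  Hence the segment lies on a line
   through the origin, and the center of C1, at distance rho from that line, is
   at distance at least rho from the origin; this is (2), whatever rho.
   For (1), the terminal conditions put the center of C3 at distance r + rho or
   |r - rho| from the origin, while tangency at the end Q of the segment puts it
   at distance sqrt (|Q|^2 + rho^2).  The second option forces |Q|^2 = r (r - 2 rho),
   so for rho >= r/2 the segment ends at the origin and r = 2 rho; then C3 is at
   least a half turn, and a C S C C detour leaving the segment slightly earlier
   reaches the target sooner. *)

From Stdlib Require Import Reals Lra.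
From Coquelicot Require Import Coquelicot.
Open Scope R_scope.

Lemma sign_sqr (s : R) : s = 1 \/ s = -1 -> s * s = 1.
Proof. intros [-> | ->]; ring. Qed.

Lemma is_RInt_arc (g G : R -> R) (rho s c a b : R) :
  0 < rho -> s * s = 1 ->
  (forall z, is_derive G z (g z)) -> (forall z, continuous g z) ->
  is_RInt (fun t => g (c + s * (t - a) / rho)) a b
    (rho * s * (G (c + s * (b - a) / rho) - G c)).
Proof.
  intros Hrho Hs HG Hg.
  set (h := fun t => c + s * (t - a) / rho).
  assert (Hh : forall t, is_derive h t (s / rho)).
  { intros t. unfold h. auto_derive; [exact I | field; lra]. }
  replace (rho * s * (G (c + s * (b - a) / rho) - G c)) with
    (minus ((fun t => rho * s * G (h t)) b) ((fun t => rho * s * G (h t)) a)).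
  2:{ unfold minus, plus, opp, h; simpl.
      replace (c + s * (a - a) / rho) with c by (field; lra). ring. }
  apply (is_RInt_derive (fun t => rho * s * G (h t)) (fun t => g (h t))).
  - intros t _.
    replace (g (h t)) with (rho * s * scal (s / rho) (g (h t))).
    + apply is_derive_scal.
      apply (is_derive_comp (K := R_AbsRing) (V := R_NormedModule) G h); [apply HG | apply Hh].
    + unfold scal; simpl; unfold mult; simpl.
      replace (rho * s * (s / rho * g (h t))) with ((s * s) * (rho / rho) * g (h t))
        by (field; lra).
      rewrite Hs. field. lra.
  - intros t _. apply (continuous_comp h g).
    + apply (ex_derive_continuous (K := R_AbsRing) (V := R_NormedModule)). eexists. apply Hh.
    + apply Hg.
Qed.

Definition arc_dx (rho s a b : R) : R := rho * s * (sin b - sin a).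
Definition arc_dy (rho s a b : R) : R := - (rho * s * (cos b - cos a)).

(* Turn with control [s1] on [0, T1], go straight on [T1, T2], turn with [s2]
   on [T2, T3] and with [s3] after [T3]. *)
Definition cscc_heading (rho th0 s1 s2 s3 T1 T2 T3 t : R) : R :=
  th0 + (s1 * Rmin t T1 + s2 * Rmax 0 (Rmin t T3 - T2) + s3 * Rmax 0 (t - T3)) / rho.

Definition cscc_x (rho x0 th0 s1 s2 s3 T1 T2 T3 t : R) : R :=
  x0 + RInt (fun u => cos (cscc_heading rho th0 s1 s2 s3 T1 T2 T3 u)) 0 t.
Definition cscc_y (rho y0 th0 s1 s2 s3 T1 T2 T3 t : R) : R :=
  y0 + RInt (fun u => sin (cscc_heading rho th0 s1 s2 s3 T1 T2 T3 u)) 0 t.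

Ltac destruct_min_max := unfold Rmin, Rmax; repeat destruct Rle_dec; try lra.

Section CsccHeading.
Variables (rho th0 s1 s2 s3 T1 T2 T3 : R).
Hypotheses (Hrho : 0 < rho) (HT1 : 0 <= T1) (HT12 : T1 <= T2) (HT23 : T2 <= T3).

Local Notation th := (cscc_heading rho th0 s1 s2 s3 T1 T2 T3).

Lemma cscc_heading_arc1 t : 0 <= t <= T1 -> th t = th0 + s1 * t / rho.
Proof.
  intros Ht. unfold cscc_heading.
  replace (Rmin t T1) with t by destruct_min_max.
  replace (Rmax 0 (Rmin t T3 - T2)) with 0 by destruct_min_max.
  replace (Rmax 0 (t - T3)) with 0 by destruct_min_max.
  field. lra.
Qed.

Lemma cscc_heading_segment t : T1 <= t <= T2 -> th t = th T1.
Proof.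
  intros Ht. unfold cscc_heading.
  replace (Rmin t T1) with T1 by destruct_min_max.
  replace (Rmin T1 T1) with T1 by destruct_min_max.
  replace (Rmax 0 (Rmin t T3 - T2)) with 0 by destruct_min_max.
  replace (Rmax 0 (Rmin T1 T3 - T2)) with 0 by destruct_min_max.
  replace (Rmax 0 (t - T3)) with 0 by destruct_min_max.
  replace (Rmax 0 (T1 - T3)) with 0 by destruct_min_max.
  reflexivity.
Qed.

Lemma cscc_heading_arc2 t : T2 <= t <= T3 -> th t = th T1 + s2 * (t - T2) / rho.
Proof.
  intros Ht. unfold cscc_heading.
  replace (Rmin t T1) with T1 by destruct_min_max.
  replace (Rmin T1 T1) with T1 by destruct_min_max.
  replace (Rmax 0 (Rmin t T3 - T2)) with (t - T2) by destruct_min_max.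
  replace (Rmax 0 (Rmin T1 T3 - T2)) with 0 by destruct_min_max.
  replace (Rmax 0 (t - T3)) with 0 by destruct_min_max.
  replace (Rmax 0 (T1 - T3)) with 0 by destruct_min_max.
  field. lra.
Qed.

Lemma cscc_heading_arc3 t : T3 <= t -> th t = th T3 + s3 * (t - T3) / rho.
Proof.
  intros Ht. unfold cscc_heading.
  replace (Rmin t T1) with T1 by destruct_min_max.
  replace (Rmin T3 T1) with T1 by destruct_min_max.
  replace (Rmin t T3) with T3 by destruct_min_max.
  replace (Rmin T3 T3) with T3 by destruct_min_max.
  replace (Rmax 0 (t - T3)) with (t - T3) by destruct_min_max.
  replace (Rmax 0 (T3 - T3)) with 0 by destruct_min_max.
  field. lra.
Qed.

Hypotheses (Hs1 : s1 = 1 \/ s1 = -1) (Hs2 : s2 = 1 \/ s2 = -1) (Hs3 : s3 = 1 \/ s3 = -1).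

Lemma cscc_heading_lipschitz t u : Rabs (th t - th u) <= Rabs (t - u) / rho.
Proof.
  assert (Hle : forall t u, u <= t -> Rabs (th t - th u) <= Rabs (t - u) / rho).
  2:{ destruct (Rle_dec u t); [now apply Hle |].
      rewrite Rabs_minus_sym, (Rabs_minus_sym t). apply Hle. lra. }
  clear t u. intros t u Hut.
  set (d1 := Rmin t T1 - Rmin u T1).
  set (d2 := Rmax 0 (Rmin t T3 - T2) - Rmax 0 (Rmin u T3 - T2)).
  set (d3 := Rmax 0 (t - T3) - Rmax 0 (u - T3)).
  assert (Hd : 0 <= d1 /\ 0 <= d2 /\ 0 <= d3 /\ d1 + d2 + d3 <= t - u)
    by (unfold d1, d2, d3; destruct_min_max).
  replace (th t - th u) with ((s1 * d1 + s2 * d2 + s3 * d3) / rho)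
    by (unfold cscc_heading, d1, d2, d3; field; lra).
  rewrite Rabs_div by lra. rewrite (Rabs_pos_eq rho), (Rabs_pos_eq (t - u)) by lra.
  apply Rmult_le_compat_r; [apply Rlt_le, Rinv_0_lt_compat; lra |].
  apply Rabs_le.
  destruct Hs1 as [-> | ->], Hs2 as [-> | ->], Hs3 as [-> | ->]; lra.
Qed.

Lemma RInt_cscc_heading (g G : R -> R) Tf :
  (forall z, is_derive G z (g z)) -> (forall z, continuous g z) -> T3 <= Tf ->
  RInt (fun t => g (th t)) 0 Tf =
  rho * s1 * (G (th T1) - G th0) + (T2 - T1) * g (th T1) +
  rho * s2 * (G (th T3) - G (th T1)) + rho * s3 * (G (th Tf) - G (th T3)).
Proof.
  intros HG Hg HTf. apply is_RInt_unique.
  assert (Hpiece : forall a b c s, a <= b -> s * s = 1 ->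
            (forall t, a <= t <= b -> th t = c + s * (t - a) / rho) ->
            is_RInt (fun t => g (th t)) a b (rho * s * (G (th b) - G c))).
  { intros a b c s Hab Hs Hth. rewrite (Hth b) by lra.
    apply (is_RInt_ext (fun t => g (c + s * (t - a) / rho))); [| now apply is_RInt_arc].
    intros t Ht. rewrite Rmin_left, Rmax_right in Ht by lra. rewrite Hth by lra. reflexivity. }
  assert (I1 : is_RInt (fun t => g (th t)) 0 T1 (rho * s1 * (G (th T1) - G th0))).
  { apply Hpiece; [lra | now apply sign_sqr |].
    intros t Ht. rewrite cscc_heading_arc1 by lra. f_equal. field. lra. }
  assert (I2 : is_RInt (fun t => g (th t)) T1 T2 ((T2 - T1) * g (th T1))).
  { apply (is_RInt_ext (fun _ => g (th T1))); [| exact (is_RInt_const T1 T2 (g (th T1)))].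
    intros t Ht. rewrite Rmin_left, Rmax_right in Ht by lra.
    rewrite (cscc_heading_segment t) by lra. reflexivity. }
  assert (I3 : is_RInt (fun t => g (th t)) T2 T3 (rho * s2 * (G (th T3) - G (th T1)))).
  { apply Hpiece; [lra | now apply sign_sqr |]. intros t Ht. now apply cscc_heading_arc2. }
  assert (I4 : is_RInt (fun t => g (th t)) T3 Tf (rho * s3 * (G (th Tf) - G (th T3)))).
  { apply Hpiece; [lra | now apply sign_sqr |]. intros t Ht. apply cscc_heading_arc3. lra. }
  exact (is_RInt_Chasles _ _ _ _ _ _ (is_RInt_Chasles _ _ _ _ _ _
           (is_RInt_Chasles _ _ _ _ _ _ I1 I2) I3) I4).
Qed.

Lemma cscc_x_closed x0 Tf : T3 <= Tf ->
  cscc_x rho x0 th0 s1 s2 s3 T1 T2 T3 Tf =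
  x0 + arc_dx rho s1 th0 (th T1) + (T2 - T1) * cos (th T1) +
  arc_dx rho s2 (th T1) (th T3) + arc_dx rho s3 (th T3) (th Tf).
Proof.
  intros HTf. unfold cscc_x, arc_dx.
  rewrite (RInt_cscc_heading cos sin) by (auto using is_derive_sin, continuous_cos). ring.
Qed.

Lemma cscc_y_closed y0 Tf : T3 <= Tf ->
  cscc_y rho y0 th0 s1 s2 s3 T1 T2 T3 Tf =
  y0 + arc_dy rho s1 th0 (th T1) + (T2 - T1) * sin (th T1) +
  arc_dy rho s2 (th T1) (th T3) + arc_dy rho s3 (th T3) (th Tf).
Proof.
  intros HTf. unfold cscc_y, arc_dy.
  rewrite (RInt_cscc_heading sin (fun z => - cos z)); [ring | | exact continuous_sin | exact HTf].
  intros z. auto_derive; [exact I | ring].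
Qed.

Lemma cscc_admissible r x0 y0 Tf : 0 < Tf ->
  cscc_x rho x0 th0 s1 s2 s3 T1 T2 T3 Tf ^ 2 + cscc_y rho y0 th0 s1 s2 s3 T1 T2 T3 Tf ^ 2 = r ^ 2 ->
  cscc_x rho x0 th0 s1 s2 s3 T1 T2 T3 Tf * cos (th Tf) +
  cscc_y rho y0 th0 s1 s2 s3 T1 T2 T3 Tf * sin (th Tf) = 0 ->
  admissible rho r x0 y0 th0
    (cscc_x rho x0 th0 s1 s2 s3 T1 T2 T3) (cscc_y rho y0 th0 s1 s2 s3 T1 T2 T3) th Tf.
Proof.
  intros HTf Hend1 Hend2.
  unfold admissible. repeat split; try assumption.
  - unfold cscc_x. rewrite RInt_point. unfold zero; simpl. ring.
  - unfold cscc_y. rewrite RInt_point. unfold zero; simpl. ring.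
  - rewrite cscc_heading_arc1 by lra. field. lra.
  - intros t u _ _. apply cscc_heading_lipschitz.
Qed.

Lemma optimal_le_cscc r x0 y0 (x y th' : R -> R) tf Tf :
  optimal rho r x0 y0 th0 x y th' tf -> 0 < Tf ->
  cscc_x rho x0 th0 s1 s2 s3 T1 T2 T3 Tf ^ 2 + cscc_y rho y0 th0 s1 s2 s3 T1 T2 T3 Tf ^ 2 = r ^ 2 ->
  cscc_x rho x0 th0 s1 s2 s3 T1 T2 T3 Tf * cos (th Tf) +
  cscc_y rho y0 th0 s1 s2 s3 T1 T2 T3 Tf * sin (th Tf) = 0 ->
  tf <= Tf.
Proof.
  intros [_ Hmin] HTf Hend1 Hend2. eapply Hmin. now apply cscc_admissible.
Qed.

End CsccHeading.

Lemma sin_cos_sqr a : sin a ^ 2 + cos a ^ 2 = 1.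
Proof. rewrite <- (sin2_cos2 a). unfold Rsqr. ring. Qed.

(* Signed distance from the directed line through [(px, py)] with heading [phi]
   to the origin, positive when the origin lies on the left. *)
Definition origin_offset (px py phi : R) : R := px * sin phi - py * cos phi.

Lemma turn_center_x_arc rho s px a b :
  turn_center_x rho s (px + arc_dx rho s a b) b = turn_center_x rho s px a.
Proof. unfold turn_center_x, arc_dx. ring. Qed.

Lemma turn_center_y_arc rho s py a b :
  turn_center_y rho s (py + arc_dy rho s a b) b = turn_center_y rho s py a.
Proof. unfold turn_center_y, arc_dy. ring. Qed.

Lemma turn_center_norm2 rho s px py phi : s * s = 1 ->
  turn_center_x rho s px phi ^ 2 + turn_center_y rho s py phi ^ 2 =
  px ^ 2 + py ^ 2 + rho ^ 2 - 2 * s * rho * origin_offset px py phi.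
Proof.
  intros Hs. unfold turn_center_x, turn_center_y, origin_offset.
  transitivity (px ^ 2 + py ^ 2 + s * s * rho ^ 2 * (sin phi ^ 2 + cos phi ^ 2)
                - 2 * s * rho * (px * sin phi - py * cos phi)); [ring |].
  rewrite Hs, sin_cos_sqr. ring.
Qed.

Lemma origin_offset_segment px py l phi :
  origin_offset (px + l * cos phi) (py + l * sin phi) phi = origin_offset px py phi.
Proof. unfold origin_offset. ring. Qed.

Lemma origin_offset_sqr px py phi :
  origin_offset px py phi ^ 2 + (px * cos phi + py * sin phi) ^ 2 = px ^ 2 + py ^ 2.
Proof.
  unfold origin_offset.
  transitivity ((px ^ 2 + py ^ 2) * (sin phi ^ 2 + cos phi ^ 2)); [ring |].
  rewrite sin_cos_sqr. ring.
Qed.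

Lemma rotate_target r X Y psi p :
  X ^ 2 + Y ^ 2 = r ^ 2 -> X * cos psi + Y * sin psi = 0 ->
  (cos p * X - sin p * Y) ^ 2 + (sin p * X + cos p * Y) ^ 2 = r ^ 2 /\
  (cos p * X - sin p * Y) * cos (psi + p) + (sin p * X + cos p * Y) * sin (psi + p) = 0.
Proof.
  intros Hr Ht. rewrite cos_plus, sin_plus. split.
  - transitivity ((X ^ 2 + Y ^ 2) * (sin p ^ 2 + cos p ^ 2)); [ring |].
    rewrite Hr, sin_cos_sqr. ring.
  - transitivity ((X * cos psi + Y * sin psi) * (sin p ^ 2 + cos p ^ 2)); [ring |].
    rewrite Ht. ring.
Qed.

Lemma continuous_near (f : R -> R) x eps : continuous f x -> 0 < eps ->
  locally x (fun y => Rabs (f y - f x) < eps).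
Proof.
  intros Hf Heps. apply (Hf (fun z => Rabs (z - f x) < eps)).
  exists (mkposreal eps Heps). intros z Hz. exact Hz.
Qed.

Lemma is_derive_descent (f : R -> R) x l (P : R -> Prop) :
  is_derive f x l -> l <> 0 -> locally x P -> exists y, P y /\ f y < f x.
Proof.
  intros Hf Hl [e He].
  apply is_derive_Reals in Hf.
  assert (Hl2 : 0 < Rabs l / 2) by (apply Rabs_pos_lt in Hl; lra).
  destruct (Hf (Rabs l / 2) Hl2) as [d Hd].
  (* step against the sign of [l]: the difference quotient keeps the sign of [l] *)
  set (m := Rmin d e / 2).
  assert (Hm : 0 < m /\ m < d /\ m < e).
  { assert (0 < Rmin d e) by (apply Rmin_pos; apply cond_pos).
    pose proof (Rmin_l d e). pose proof (Rmin_r d e). unfold m. lra. }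
  set (h := if Rlt_dec 0 l then - m else m).
  assert (Hh : Rabs h = m).
  { unfold h. destruct Rlt_dec; [rewrite Rabs_Ropp |]; apply Rabs_pos_eq; lra. }
  assert (Hh0 : h <> 0) by (intros H0; rewrite H0, Rabs_R0 in Hh; lra).
  exists (x + h). split.
  - apply He. unfold ball; simpl; unfold AbsRing_ball, abs, minus, plus, opp; simpl.
    replace (x + h + - x) with h by ring. lra.
  - specialize (Hd h Hh0 ltac:(lra)). apply Rabs_def2 in Hd. destruct Hd as [Hd1 Hd2].
    set (q := (f (x + h) - f x) / h) in *.
    assert (Hq : f (x + h) - f x = q * h) by (unfold q; field; exact Hh0).
    enough (q * h < 0) by lra.
    unfold h; destruct Rlt_dec.
    + rewrite Rabs_pos_eq in Hd2 by lra. nra.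
    + assert (l < 0) by lra. rewrite Rabs_left in Hd1 by lra. nra.
Qed.

Lemma cos_sin_atan_ratio (N D W : R) : 0 < D -> 0 < W -> D ^ 2 + N ^ 2 = W ^ 2 ->
  cos (atan (N / D)) = D / W /\ sin (atan (N / D)) = N / W.
Proof.
  intros HD HW HE.
  assert (Hs : sqrt (1 + (N / D)²) = W / D).
  { rewrite <- (sqrt_pow2 (W / D)) by (apply Rlt_le, Rdiv_lt_0_compat; lra).
    f_equal. replace ((W / D) ^ 2) with (W ^ 2 / D ^ 2) by (field; lra).
    rewrite <- HE. unfold Rsqr. field. lra. }
  rewrite cos_atan, sin_atan, Hs. split; field; lra.
Qed.

(* Coordinates are taken in the frame of the start of a straight segment of
   length [L] (first axis along the segment), in which the origin is [(u, v)].
   Rotating the final turning circle by [p] about the origin moves its center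
   to [(rotated_center_x p, rotated_center_y p)] relative to the initial turning
   center; the new path first turns by [tangent_turn p] more, follows the common
   tangent of length [tangent_length p], and ends [rotation_delay p] later. *)
Section RotatedTangent.
Variables (rho s1 s3 L u v : R).

Definition tangent_shift : R := (s3 - s1) * rho.

Definition rotated_center_x (p : R) : R := u + cos p * (L - u) - sin p * (s3 * rho - v).
Definition rotated_center_y (p : R) : R :=
  v + sin p * (L - u) + cos p * (s3 * rho - v) - s1 * rho.

Definition tangent_gap (p : R) : R :=
  rotated_center_x p ^ 2 + rotated_center_y p ^ 2 - tangent_shift ^ 2.

Definition tangent_length (p : R) : R := sqrt (tangent_gap p).

Definition tangent_denom (p : R) : R :=
  tangent_length p * rotated_center_x p + tangent_shift * rotated_center_y p.

Definition tangent_turn (p : R) : R :=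
  atan ((tangent_length p * rotated_center_y p - tangent_shift * rotated_center_x p) /
        tangent_denom p).

Definition rotation_delay (p : R) : R :=
  rho * s1 * tangent_turn p + rho * s3 * (p - tangent_turn p) + tangent_length p - L.

Lemma tangent_polar p : 0 <= tangent_gap p -> 0 < tangent_denom p ->
  tangent_length p * cos (tangent_turn p) - tangent_shift * sin (tangent_turn p) =
    rotated_center_x p /\
  tangent_length p * sin (tangent_turn p) + tangent_shift * cos (tangent_turn p) =
    rotated_center_y p.
Proof.
  unfold tangent_turn, tangent_denom. intros Hgap Hden.
  assert (Hl2 : tangent_length p ^ 2 = tangent_gap p) by (apply pow2_sqrt; exact Hgap).
  unfold tangent_gap in Hgap, Hl2.
  set (l := tangent_length p) in *. set (k := tangent_shift) in *.
  set (wx := rotated_center_x p) in *. set (wy := rotated_center_y p) in *.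
  clearbody l k wx wy.
  assert (HW : 0 < wx ^ 2 + wy ^ 2).
  { destruct (Req_dec (wx ^ 2 + wy ^ 2) 0) as [H0 | H0]; [exfalso | nra].
    assert (wx = 0) by nra. assert (wy = 0) by nra. subst wx wy. nra. }
  destruct (cos_sin_atan_ratio (l * wy - k * wx) (l * wx + k * wy) (wx ^ 2 + wy ^ 2))
    as [Hc Hs]; [exact Hden | exact HW | |].
  { transitivity ((l ^ 2 + k ^ 2) * (wx ^ 2 + wy ^ 2)); [ring |]. rewrite Hl2. ring. }
  rewrite Hc, Hs. split; field_simplify; try lra; rewrite Hl2; field; lra.
Qed.

Lemma rotated_center_x_0 : rotated_center_x 0 = L.
Proof. unfold rotated_center_x. rewrite cos_0, sin_0. ring. Qed.

Lemma rotated_center_y_0 : rotated_center_y 0 = tangent_shift.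
Proof. unfold rotated_center_y, tangent_shift. rewrite cos_0, sin_0. ring. Qed.

Lemma is_derive_rotated_center_x p :
  is_derive rotated_center_x p (- sin p * (L - u) - cos p * (s3 * rho - v)).
Proof. unfold rotated_center_x. auto_derive; [exact I | ring]. Qed.

Lemma is_derive_rotated_center_y p :
  is_derive rotated_center_y p (cos p * (L - u) - sin p * (s3 * rho - v)).
Proof. unfold rotated_center_y. auto_derive; [exact I | ring]. Qed.

Lemma ex_derive_rotated_center_x p : ex_derive rotated_center_x p.
Proof. eexists. apply is_derive_rotated_center_x. Qed.

Lemma ex_derive_rotated_center_y p : ex_derive rotated_center_y p.
Proof. eexists. apply is_derive_rotated_center_y. Qed.

Hypotheses (HL : 0 < L) (Hs1 : s1 = 1 \/ s1 = -1) (Hs3 : s3 = 1 \/ s3 = -1).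

Lemma tangent_gap_0 : tangent_gap 0 = L ^ 2.
Proof. unfold tangent_gap. rewrite rotated_center_x_0, rotated_center_y_0. ring. Qed.

Lemma tangent_length_0 : tangent_length 0 = L.
Proof. unfold tangent_length. rewrite tangent_gap_0. apply sqrt_pow2. lra. Qed.

Lemma tangent_denom_0 : tangent_denom 0 = L ^ 2 + tangent_shift ^ 2.
Proof.
  unfold tangent_denom. rewrite tangent_length_0, rotated_center_x_0, rotated_center_y_0. ring.
Qed.

Lemma tangent_turn_0 : tangent_turn 0 = 0.
Proof.
  unfold tangent_turn. rewrite tangent_length_0, rotated_center_x_0, rotated_center_y_0.
  replace (L * tangent_shift - tangent_shift * L) with 0 by ring.
  unfold Rdiv. rewrite Rmult_0_l. apply atan_0.
Qed.

Lemma rotation_delay_0 : rotation_delay 0 = 0.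
Proof. unfold rotation_delay. rewrite tangent_turn_0, tangent_length_0. ring. Qed.

Lemma is_derive_rotation_delay : is_derive rotation_delay 0 v.
Proof.
  assert (Hk : 0 <= tangent_shift * tangent_shift) by nra.
  assert (HL2 : L * (L * 1) + tangent_shift * (tangent_shift * 1)
                + - (tangent_shift * (tangent_shift * 1)) = L ^ 2) by ring.
  assert (Hdx : Derive (fun p => rotated_center_x p) 0 = - (s3 * rho - v)).
  { apply is_derive_unique. replace (- (s3 * rho - v)) with
      (- sin 0 * (L - u) - cos 0 * (s3 * rho - v)) by (rewrite cos_0, sin_0; ring).
    apply is_derive_rotated_center_x. }
  assert (Hdy : Derive (fun p => rotated_center_y p) 0 = L - u).
  { apply is_derive_unique. replace (L - u) with
      (cos 0 * (L - u) - sin 0 * (s3 * rho - v)) by (rewrite cos_0, sin_0; ring).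
    apply is_derive_rotated_center_y. }
  unfold rotation_delay, tangent_turn, tangent_denom, tangent_length, tangent_gap.
  auto_derive;
    rewrite ?rotated_center_x_0, ?rotated_center_y_0, ?Hdx, ?Hdy, ?HL2, ?sqrt_pow2 by lra.
  - repeat split; auto using ex_derive_rotated_center_x, ex_derive_rotated_center_y; nra.
  - assert (HL4 : 0 < (L * L) * (L * L)) by (apply Rmult_lt_0_compat; nra).
    assert (HLr : 0 < L * L + 4 * (rho * rho)) by nra.
    assert (HLr2 : 0 < (L * L + 4 * (rho * rho)) * (L * L + 4 * (rho * rho)))
      by (apply Rmult_lt_0_compat; lra).
    unfold tangent_shift.
    destruct Hs1 as [-> | ->]; destruct Hs3 as [-> | ->]; field; repeat split; intros Hz; nra.
Qed.

Lemma ex_derive_tangent_gap : ex_derive tangent_gap 0.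
Proof.
  unfold tangent_gap. auto_derive.
  repeat split; auto using ex_derive_rotated_center_x, ex_derive_rotated_center_y.
Qed.

Lemma ex_derive_tangent_denom : ex_derive tangent_denom 0.
Proof.
  unfold tangent_denom, tangent_length, tangent_gap. auto_derive.
  rewrite rotated_center_x_0, rotated_center_y_0.
  repeat split; auto using ex_derive_rotated_center_x, ex_derive_rotated_center_y; nra.
Qed.

Lemma ex_derive_tangent_turn : ex_derive tangent_turn 0.
Proof.
  unfold tangent_turn, tangent_denom, tangent_length, tangent_gap. auto_derive.
  rewrite rotated_center_x_0, rotated_center_y_0.
  replace (L * (L * 1) + tangent_shift * (tangent_shift * 1)
           + - (tangent_shift * (tangent_shift * 1))) with (L ^ 2) by ring.
  rewrite sqrt_pow2 by lra.
  repeat split; auto using ex_derive_rotated_center_x, ex_derive_rotated_center_y; nra.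
Qed.

Lemma rotation_near_0 (eps : R) : 0 < eps ->
  locally 0 (fun p => 0 < tangent_gap p /\ 0 < tangent_denom p /\ Rabs (tangent_turn p) < eps).
Proof.
  intros Heps.
  assert (Hk : 0 <= tangent_shift ^ 2) by nra.
  assert (HL2 : 0 < L ^ 2) by nra.
  assert (Hgap := continuous_near _ _ _ (ex_derive_continuous _ _ ex_derive_tangent_gap) HL2).
  assert (Hden := continuous_near _ _ _ (ex_derive_continuous _ _ ex_derive_tangent_denom) HL2).
  assert (Hturn := continuous_near _ _ _ (ex_derive_continuous _ _ ex_derive_tangent_turn) Heps).
  rewrite tangent_gap_0 in Hgap. rewrite tangent_denom_0 in Hden. rewrite tangent_turn_0 in Hturn.
  generalize (filter_and _ _ Hgap (filter_and _ _ Hden Hturn)).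
  apply filter_imp. intros p (H1 & H2 & H3).
  apply Rabs_def2 in H1, H2. rewrite Rminus_0_r in H3. repeat split; lra.
Qed.

End RotatedTangent.

Lemma sin_ge_cubic a : 0 <= a -> a <= PI -> a - a ^ 3 / 6 <= sin a.
Proof.
  intros. replace (a - a ^ 3 / 6) with (sin_approx a 1)
    by (unfold sin_approx, sin_term; simpl; field).
  apply (sin_bound a 0); assumption.
Qed.

Lemma sin_le_quintic a : 0 <= a -> a <= PI -> sin a <= a - a ^ 3 / 6 + a ^ 5 / 120.
Proof.
  intros. replace (a - a ^ 3 / 6 + a ^ 5 / 120) with (sin_approx a 2)
    by (unfold sin_approx, sin_term; simpl; field).
  apply (sin_bound a 0); assumption.
Qed.

Lemma cos_ge_quadratic a : - PI / 2 <= a -> a <= PI / 2 -> 1 - a ^ 2 / 2 <= cos a.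
Proof.
  intros. replace (1 - a ^ 2 / 2) with (cos_approx a 1)
    by (unfold cos_approx, cos_term; simpl; field).
  apply (cos_bound a 0); assumption.
Qed.

Lemma cos_le_quartic a : - PI / 2 <= a -> a <= PI / 2 -> cos a <= 1 - a ^ 2 / 2 + a ^ 4 / 24.
Proof.
  intros. replace (1 - a ^ 2 / 2 + a ^ 4 / 24) with (cos_approx a 2)
    by (unfold cos_approx, cos_term; simpl; field).
  apply (cos_bound a 0); assumption.
Qed.

Lemma acos_cos_sqr_bounds n : 0 < n -> n <= 1 / 2 ->
  let b := acos (cos n ^ 2) in
  cos b = cos n ^ 2 /\ 0 <= b <= 3 / 2 * n /\
  2 * b - 2 * n < 2 * sin b - sin (2 * n) <= 3 * n.
Proof.
  intros Hn Hn2 b.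
  pose proof PI2_1 as HPI.
  assert (Hc1 : 1 - n ^ 2 / 2 <= cos n) by (apply cos_ge_quadratic; lra).
  assert (Hcn : 0 <= cos n ^ 2 <= 1).
  { pose proof (COS_bound n). assert (0 <= cos n) by nra. split; nra. }
  assert (Hcb : cos b = cos n ^ 2) by (apply cos_acos; lra).
  destruct (acos_bound (cos n ^ 2)) as [Hb0 HbPI]. fold b in Hb0, HbPI.
  assert (Hb15 : b <= 3 / 2 * n).
  { destruct (Rle_dec b (3 / 2 * n)) as [| Hgt]; [assumption | exfalso].
    assert (Hlt : cos b < cos (3 / 2 * n)) by (apply cos_decreasing_1; lra).
    assert (cos (3 / 2 * n) <= 1 - (3 / 2 * n) ^ 2 / 2 + (3 / 2 * n) ^ 4 / 24)
      by (apply cos_le_quartic; lra).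
    assert ((1 - n ^ 2 / 2) ^ 2 <= cos n ^ 2)
      by (assert (0 <= 1 - n ^ 2 / 2) by nra; apply pow_incr; lra).
    rewrite Hcb in Hlt. nra. }
  assert (b - b ^ 3 / 6 <= sin b) by (apply sin_ge_cubic; lra).
  assert (sin b <= b - b ^ 3 / 6 + b ^ 5 / 120) by (apply sin_le_quintic; lra).
  assert (sin (2 * n) <= 2 * n - (2 * n) ^ 3 / 6 + (2 * n) ^ 5 / 120)
    by (apply sin_le_quintic; lra).
  assert (0 <= sin (2 * n)) by (apply sin_ge_0; lra).
  assert (b ^ 3 <= (3 / 2 * n) ^ 3) by (apply pow_incr; lra).
  repeat split; try lra.
  - assert (0 < n ^ 3) by (apply pow_lt; lra).
    assert (n ^ 5 <= n ^ 3 / 4).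
    { replace (n ^ 5) with (n ^ 3 * n ^ 2) by ring. assert (n ^ 2 <= 1 / 4) by nra. nra. }
    nra.
  - assert (b ^ 5 <= 20 * b ^ 3).
    { replace (b ^ 5) with (b ^ 3 * b ^ 2) by ring. assert (b ^ 2 <= 20) by nra.
      assert (0 <= b ^ 3) by (apply pow_le; lra). nra. }
    nra.
Qed.

Lemma detour_parameters rho L : 0 < rho -> 0 < L -> exists b n,
  cos b = cos n ^ 2 /\ 0 <= b /\ n <= 1 / 2 /\
  rho * (2 * sin b - sin (2 * n)) <= L /\
  rho * (2 * b - 2 * n) < rho * (2 * sin b - sin (2 * n)).
Proof.
  intros Hrho HL.
  set (n := Rmin (1 / 2) (L / (3 * rho))).
  assert (Hn0 : 0 < n) by (apply Rmin_pos; [lra | apply Rdiv_lt_0_compat; lra]).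
  assert (Hn1 : n <= 1 / 2) by apply Rmin_l.
  assert (Hn2 : 3 * rho * n <= L).
  { assert (Hle : n <= L / (3 * rho)) by apply Rmin_r.
    apply (Rmult_le_compat_l (3 * rho)) in Hle; [| lra].
    replace (3 * rho * (L / (3 * rho))) with L in Hle by (field; lra). exact Hle. }
  destruct (acos_cos_sqr_bounds n Hn0 Hn1) as (Hcb & Hb & Hgain & Hell).
  exists (acos (cos n ^ 2)), n. repeat split; try lra; nra.
Qed.

Lemma sin_sub_sign s a b : s = 1 \/ s = -1 -> sin (a - s * b) = sin a * cos b - s * cos a * sin b.
Proof.
  intros [-> | ->]; [rewrite Rmult_1_l, sin_minus; ring |].
  replace (a - -1 * b) with (a + b) by ring. rewrite sin_plus. ring.
Qed.

Lemma cos_sub_sign s a b : s = 1 \/ s = -1 -> cos (a - s * b) = cos a * cos b + s * sin a * sin b.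
Proof.
  intros [-> | ->]; [rewrite Rmult_1_l, cos_minus; ring |].
  replace (a - -1 * b) with (a + b) by ring. rewrite cos_plus. ring.
Qed.

(* From the point [ell] before the origin on a line through it, turning by [b]
   against [s] and then by [PI + b - 2 n] with [s] reaches the circle of radius
   [2 rho] about the origin perpendicularly, provided [cos b = cos n ^ 2]. *)
Section Detour.
Variables (rho s phi b n : R).
Hypotheses (Hs : s = 1 \/ s = -1) (Hb : cos b = cos n ^ 2).

Let ell := rho * (2 * sin b - sin (2 * n)).
Let phi1 := phi - s * b.
Let phi2 := phi1 + s * (PI + b - 2 * n).
Let X := - ell * cos phi + arc_dx rho (- s) phi phi1 + arc_dx rho s phi1 phi2.
Let Y := - ell * sin phi + arc_dy rho (- s) phi phi1 + arc_dy rho s phi1 phi2.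

Lemma detour_reaches_target : X ^ 2 + Y ^ 2 = (2 * rho) ^ 2 /\ X * cos phi2 + Y * sin phi2 = 0.
Proof.
  assert (Hss : s * s = 1) by (apply sign_sqr; exact Hs).
  assert (Hphi2 : phi2 = phi - s * (2 * n - PI)) by (unfold phi2, phi1; ring).
  assert (Hsin1 := sin_sub_sign s phi b Hs). assert (Hcos1 := cos_sub_sign s phi b Hs).
  assert (Hsin2 := sin_sub_sign s phi (2 * n - PI) Hs).
  assert (Hcos2 := cos_sub_sign s phi (2 * n - PI) Hs).
  assert (Hsh : sin (2 * n - PI) = - sin (2 * n)) by (rewrite sin_minus, sin_PI, cos_PI; ring).
  assert (Hch : cos (2 * n - PI) = - cos (2 * n)) by (rewrite cos_minus, sin_PI, cos_PI; ring).
  rewrite Hsh, Hch in Hsin2, Hcos2.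
  assert (Hc2n : cos (2 * n) = 2 * cos b - 1) by (rewrite cos_2a_cos, Hb; ring).
  assert (Hs2n : sin (2 * n) ^ 2 = 4 * cos b * (1 - cos b)).
  { rewrite sin_2a, Hb. transitivity (4 * cos n ^ 2 * sin n ^ 2); [ring |].
    replace (sin n ^ 2) with (1 - cos n ^ 2) by (rewrite <- (sin_cos_sqr n); ring). ring. }
  assert (HX : X = 2 * rho * cos phi * sin (2 * n) + rho * s * sin phi * (2 - 4 * cos b)).
  { unfold X, ell, arc_dx. fold phi1. rewrite Hphi2. unfold phi1. rewrite Hsin1, Hsin2, Hc2n.
    destruct Hs as [-> | ->]; ring. }
  assert (HY : Y = 2 * rho * sin phi * sin (2 * n) - rho * s * cos phi * (2 - 4 * cos b)).
  { unfold Y, ell, arc_dy. fold phi1. rewrite Hphi2. unfold phi1. rewrite Hcos1, Hcos2, Hc2n.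
    destruct Hs as [-> | ->]; ring. }
  rewrite HX, HY, Hphi2, Hsin2, Hcos2, Hc2n. split.
  - transitivity (rho ^ 2 * (sin phi ^ 2 + cos phi ^ 2) *
                  (4 * sin (2 * n) ^ 2 + s * s * (2 - 4 * cos b) ^ 2)); [ring |].
    rewrite sin_cos_sqr, Hs2n, Hss. ring.
  - transitivity (- rho * (sin phi ^ 2 + cos phi ^ 2) * sin (2 * n) *
                  (2 * (2 * cos b - 1) + s * s * (2 - 4 * cos b))); [ring |].
    rewrite Hss. ring.
Qed.

End Detour.

Lemma arc_chord_sqr rho s a b : s * s = 1 ->
  arc_dx rho s a b ^ 2 + arc_dy rho s a b ^ 2 = 2 * rho ^ 2 * (1 - cos (b - a)).
Proof.
  intros Hs. unfold arc_dx, arc_dy. rewrite cos_minus.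
  transitivity (rho ^ 2 * (s * s) * ((sin b ^ 2 + cos b ^ 2) + (sin a ^ 2 + cos a ^ 2)
                - 2 * (cos b * cos a + sin b * sin a))); [ring |].
  rewrite Hs, !sin_cos_sqr. ring.
Qed.

Lemma cos_eq_m1_ge_PI a : 0 <= a -> cos a = -1 -> PI <= a.
Proof.
  intros Ha Hcos. destruct (Rle_dec PI a) as [| Hlt]; [assumption | exfalso].
  assert (cos PI < cos a) by (apply cos_decreasing_1; pose proof PI_RGT_0; lra).
  rewrite cos_PI in *. lra.
Qed.

Section OptimalCSC.
Variables (rho r x0 y0 th0 : R) (x y th : R -> R) (tf t1 t2 s1 s3 : R).
Hypotheses (Hrho : 0 < rho) (Hr : 0 < r) (Hopt : optimal rho r x0 y0 th0 x y th tf)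
  (Hcsc : is_CSC rho th0 th tf t1 t2 s1 s3).

Let phi := th t1.
Let psi := th tf.
Let L := t2 - t1.
Let px := x0 + arc_dx rho s1 th0 phi.
Let py := y0 + arc_dy rho s1 th0 phi.
Let qx := px + L * cos phi.
Let qy := py + L * sin phi.

Lemma csc_segment_heading : phi = th0 + s1 * t1 / rho.
Proof. destruct Hcsc as (? & ? & ? & _ & _ & Hth1 & _). apply Hth1. lra. Qed.

Lemma csc_final_heading : psi = phi + s3 * (tf - t2) / rho.
Proof.
  destruct Hcsc as (? & ? & ? & _ & _ & _ & Hth2 & Hth3).
  unfold psi, phi. rewrite Hth3, Hth2 by lra. reflexivity.
Qed.

Lemma csc_heading_eq t : 0 <= t <= tf -> th t = cscc_heading rho th0 s1 s3 1 t1 t2 tf t.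
Proof.
  pose proof csc_segment_heading as Hphi. unfold phi in Hphi.
  destruct Hcsc as (? & ? & ? & _ & _ & Hth1 & Hth2 & Hth3). intros Ht.
  destruct (Rle_dec t t1); [| destruct (Rle_dec t t2)].
  - rewrite cscc_heading_arc1 by lra. apply Hth1. lra.
  - rewrite cscc_heading_segment, cscc_heading_arc1 by lra.
    rewrite Hth2 by lra. rewrite Hphi. reflexivity.
  - rewrite cscc_heading_arc2, cscc_heading_arc1 by lra.
    rewrite Hth3, Hth2, Hphi by lra. reflexivity.
Qed.

Lemma csc_endpoint : x tf = qx + arc_dx rho s3 phi psi /\ y tf = qy + arc_dy rho s3 phi psi.
Proof.
  pose proof Hcsc as (? & ? & ? & Hs1 & Hs3 & _).
  destruct Hopt as ((_ & _ & _ & _ & _ & Hxy & _) & _).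
  destruct (Hxy tf) as [Hx Hy]; [lra |].
  assert (Hint : forall f : R -> R,
    RInt (fun t => f (th t)) 0 tf =
    RInt (fun t => f (cscc_heading rho th0 s1 s3 1 t1 t2 tf t)) 0 tf).
  { intros f. apply RInt_ext. intros t Ht. rewrite Rmin_left, Rmax_right in Ht by lra.
    rewrite csc_heading_eq by lra. reflexivity. }
  assert (Hphi : cscc_heading rho th0 s1 s3 1 t1 t2 tf t1 = phi)
    by (symmetry; apply csc_heading_eq; lra).
  assert (Hpsi : cscc_heading rho th0 s1 s3 1 t1 t2 tf tf = psi)
    by (symmetry; apply csc_heading_eq; lra).
  split.
  - rewrite Hx, Hint. fold (cscc_x rho x0 th0 s1 s3 1 t1 t2 tf tf).
    rewrite cscc_x_closed, Hphi, Hpsi by (auto; lra).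
    unfold qx, px, L, arc_dx. ring.
  - rewrite Hy, Hint. fold (cscc_y rho y0 th0 s1 s3 1 t1 t2 tf tf).
    rewrite cscc_y_closed, Hphi, Hpsi by (auto; lra).
    unfold qy, py, L, arc_dy. ring.
Qed.

Let u := - (px * cos phi + py * sin phi).
Let v := origin_offset px py phi.

Lemma csc_frame : px = - (u * cos phi - v * sin phi) /\ py = - (u * sin phi + v * cos phi).
Proof.
  unfold u, v, origin_offset. split.
  - transitivity (px * (sin phi ^ 2 + cos phi ^ 2)); [rewrite sin_cos_sqr |]; ring.
  - transitivity (py * (sin phi ^ 2 + cos phi ^ 2)); [rewrite sin_cos_sqr |]; ring.
Qed.

Section Rotation.
Variable p : R.
Hypotheses (Hgap : 0 <= tangent_gap rho s1 s3 L u v p) (Hden : 0 < tangent_denom rho s1 s3 L u v p).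

Let delta := tangent_turn rho s1 s3 L u v p.
Let ell := tangent_length rho s1 s3 L u v p.
Let T1' := t1 + rho * s1 * delta.
Let T2' := T1' + ell.
Let T3' := T2' + (tf - t2) + rho * s3 * (p - delta).

Hypotheses (HT1 : 0 <= T1') (HT3 : T2' <= T3').

Lemma rotated_csc_segment_order : T1' <= T2'.
Proof. assert (0 <= ell) by apply sqrt_pos. unfold T2'. lra. Qed.

Lemma rotated_csc_heading :
  cscc_heading rho th0 s1 s3 1 T1' T2' T3' T1' = phi + delta /\
  cscc_heading rho th0 s1 s3 1 T1' T2' T3' T3' = psi + p.
Proof.
  pose proof Hcsc as (? & ? & ? & Hs1 & Hs3 & _).
  pose proof rotated_csc_segment_order.
  assert (Hturn1 : cscc_heading rho th0 s1 s3 1 T1' T2' T3' T1' = phi + delta).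
  { rewrite cscc_heading_arc1, csc_segment_heading by lra. unfold T1'.
    transitivity (th0 + s1 * t1 / rho + (s1 * s1) * delta); [field; lra |].
    rewrite sign_sqr by assumption. ring. }
  split; [exact Hturn1 |].
  rewrite cscc_heading_arc2, Hturn1, csc_final_heading by lra. unfold T3', T2'.
  transitivity (phi + s3 * (tf - t2) / rho + (s3 * s3) * (p - delta) + delta); [field; lra |].
  rewrite sign_sqr by assumption. ring.
Qed.

Lemma rotated_csc_endpoint :
  cscc_x rho x0 th0 s1 s3 1 T1' T2' T3' T3' = cos p * x tf - sin p * y tf /\
  cscc_y rho y0 th0 s1 s3 1 T1' T2' T3' T3' = sin p * x tf + cos p * y tf.
Proof.
  pose proof Hcsc as (? & ? & ? & Hs1 & Hs3 & _).
  pose proof rotated_csc_segment_order.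
  destruct rotated_csc_heading as [Hth1 Hth3].
  destruct csc_endpoint as [Ex Ey]. destruct csc_frame as [Hpx Hpy].
  destruct (tangent_polar rho s1 s3 L u v p Hgap Hden) as [Rx Ry].
  unfold rotated_center_x, rotated_center_y, tangent_shift in Rx, Ry. fold delta ell in Rx, Ry.
  assert (Ex0 : x0 = px - arc_dx rho s1 th0 phi) by (unfold px; ring).
  assert (Ey0 : y0 = py - arc_dy rho s1 th0 phi) by (unfold py; ring).
  rewrite cscc_x_closed, cscc_y_closed, Hth1, Hth3, Ex, Ey by (auto; lra).
  replace (T2' - T1') with ell by (unfold T2'; ring).
  rewrite Ex0, Ey0. unfold qx, qy. rewrite Hpx, Hpy. unfold arc_dx, arc_dy.
  rewrite !sin_plus, !cos_plus.
  pose proof (f_equal (Rmult (cos phi)) Rx). pose proof (f_equal (Rmult (sin phi)) Rx).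
  pose proof (f_equal (Rmult (cos phi)) Ry). pose proof (f_equal (Rmult (sin phi)) Ry).
  split; lra.
Qed.

Lemma rotated_csc_time : T3' = tf + rotation_delay rho s1 s3 L u v p.
Proof. unfold T3', T2', T1', rotation_delay. fold delta ell. unfold L. ring. Qed.

End Rotation.

Lemma csc_faster_rotation : v <> 0 -> exists p,
  0 <= tangent_gap rho s1 s3 L u v p /\ 0 < tangent_denom rho s1 s3 L u v p /\
  0 <= t1 + rho * s1 * tangent_turn rho s1 s3 L u v p /\
  0 < (tf - t2) + rho * s3 * (p - tangent_turn rho s1 s3 L u v p) /\
  rotation_delay rho s1 s3 L u v p < 0.
Proof.
  pose proof Hcsc as (Ht1 & Ht12 & Ht2 & Hs1 & Hs3 & _). intros Hv.
  set (eps := Rmin (t1 / rho) ((tf - t2) / (4 * rho))).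
  assert (Heps : 0 < eps) by (apply Rmin_pos; apply Rdiv_lt_0_compat; lra).
  assert (Heps1 : rho * eps <= t1).
  { assert (Hle : eps <= t1 / rho) by apply Rmin_l.
    apply (Rmult_le_compat_l rho) in Hle; [| lra].
    replace (rho * (t1 / rho)) with t1 in Hle by (field; lra). exact Hle. }
  assert (Heps2 : rho * eps <= (tf - t2) / 4).
  { assert (Hle : eps <= (tf - t2) / (4 * rho)) by apply Rmin_r.
    apply (Rmult_le_compat_l rho) in Hle; [| lra].
    replace (rho * ((tf - t2) / (4 * rho))) with ((tf - t2) / 4) in Hle by (field; lra).
    exact Hle. }
  assert (Hnear : locally 0 (fun p =>
    (0 < tangent_gap rho s1 s3 L u v p /\ 0 < tangent_denom rho s1 s3 L u v p /\
     Rabs (tangent_turn rho s1 s3 L u v p) < eps) /\ Rabs p < eps)).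
  { apply filter_and; [apply rotation_near_0; unfold L; lra |].
    exists (mkposreal eps Heps). intros p Hp.
    unfold ball in Hp; simpl in Hp; unfold AbsRing_ball, abs, minus, plus, opp in Hp; simpl in Hp.
    rewrite Ropp_0, Rplus_0_r in Hp. exact Hp. }
  assert (Hderiv : is_derive (rotation_delay rho s1 s3 L u v) 0 v)
    by (apply is_derive_rotation_delay; auto; unfold L; lra).
  destruct (is_derive_descent _ _ _ _ Hderiv Hv Hnear)
    as (p & ((Hgap & Hden & Hturn) & Hp) & Hfaster).
  rewrite rotation_delay_0 in Hfaster by (auto; unfold L; lra).
  exists p. apply Rabs_def2 in Hturn, Hp. repeat split; try lra.
  - assert (- eps < s1 * tangent_turn rho s1 s3 L u v p) by (destruct Hs1 as [-> | ->]; lra). nra.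
  - assert (- (2 * eps) < s3 * (p - tangent_turn rho s1 s3 L u v p))
      by (destruct Hs3 as [-> | ->]; lra).
    nra.
Qed.

Lemma csc_segment_through_origin : origin_offset px py phi = 0.
Proof.
  destruct (Req_dec v 0) as [Hv | Hv]; [exact Hv | exfalso].
  destruct (csc_faster_rotation Hv) as (p & Hgap & Hden & HT1 & HT3 & Hfaster).
  set (delta := tangent_turn rho s1 s3 L u v p) in *.
  set (T1' := t1 + rho * s1 * delta) in *.
  set (T2' := T1' + tangent_length rho s1 s3 L u v p).
  set (T3' := T2' + (tf - t2) + rho * s3 * (p - delta)).
  assert (HT23 : T2' < T3') by (unfold T3'; lra).
  pose proof (rotated_csc_segment_order p) as HT12.
  destruct (rotated_csc_endpoint p Hgap Hden HT1 (Rlt_le _ _ HT23)) as [EX EY].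
  destruct (rotated_csc_heading p HT1 (Rlt_le _ _ HT23)) as [_ Hth].
  pose proof (rotated_csc_time p) as Htime. fold delta T1' T2' T3' in Htime, EX, EY, Hth, HT12.
  pose proof Hopt as ((_ & _ & _ & _ & _ & _ & Hend1 & Hend2) & _).
  destruct (rotate_target r (x tf) (y tf) psi p Hend1 Hend2) as [Hrot1 Hrot2].
  assert (tf <= T3').
  { pose proof Hcsc as (Ht1 & _ & _ & Hs1 & Hs3 & _).
    refine (optimal_le_cscc rho th0 s1 s3 1 T1' T2' T3' _ _ _ _ _ _ _ r x0 y0 x y th tf T3'
              Hopt _ _ _); auto; try lra.
    - rewrite EX, EY. exact Hrot1.
    - rewrite EX, EY, Hth. exact Hrot2. }
  lra.
Qed.

Lemma csc_final_arc_half_turn : r = 2 * rho -> qx = 0 -> qy = 0 -> t2 + rho * PI <= tf.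
Proof.
  pose proof Hcsc as (_ & _ & Ht2 & _ & Hs3 & _).
  intros Hr2 Hqx Hqy.
  pose proof Hopt as ((_ & _ & _ & _ & _ & _ & Hend & _) & _).
  destruct csc_endpoint as [Ex Ey].
  rewrite Ex, Ey, Hqx, Hqy, !Rplus_0_l, arc_chord_sqr, Hr2 in Hend by (apply sign_sqr; exact Hs3).
  (* the final arc joins two diametrically opposite points of its circle *)
  assert (Hcos : cos (psi - phi) = -1).
  { assert (H0 : (2 * rho ^ 2) * (cos (psi - phi) + 1) = 0) by lra.
    apply Rmult_integral in H0. destruct H0 as [H0 | H0]; [nra | lra]. }
  replace (psi - phi) with (s3 * ((tf - t2) / rho)) in Hcos
    by (rewrite csc_final_heading; field; lra).
  assert (Hpi : PI <= (tf - t2) / rho).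
  { apply cos_eq_m1_ge_PI; [apply Rlt_le, Rdiv_lt_0_compat; lra |].
    destruct Hs3 as [-> | ->]; [rewrite Rmult_1_l in Hcos | rewrite <- cos_neg];
      rewrite <- Hcos; f_equal; ring. }
  apply (Rmult_le_compat_l rho) in Hpi; [| lra].
  replace (rho * ((tf - t2) / rho)) with (tf - t2) in Hpi by (field; lra). lra.
Qed.

Lemma csc_no_half_turn : r = 2 * rho -> qx = 0 -> qy = 0 -> False.
Proof.
  intros Hr2 Hqx Hqy.
  pose proof Hcsc as (Ht1 & Ht12 & Ht2 & Hs1 & Hs3 & _).
  pose proof (csc_final_arc_half_turn Hr2 Hqx Hqy) as Hhalf.
  destruct (detour_parameters rho L Hrho ltac:(unfold L; lra))
    as (b & n & Hcb & Hb & Hn & HellL & Hshorter).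
  set (ell := rho * (2 * sin b - sin (2 * n))) in *.
  set (T2 := t2 - ell). set (T3 := T2 + rho * b). set (Tf := T3 + rho * (PI + b - 2 * n)).
  set (th' := cscc_heading rho th0 s1 (- s3) s3 t1 T2 T3).
  assert (Hs3' : - s3 = 1 \/ - s3 = -1) by (destruct Hs3 as [-> | ->]; [right | left]; ring).
  assert (HT : t1 <= T2 /\ T2 <= T3 /\ T3 <= Tf).
  { assert (0 <= rho * b) by (apply Rmult_le_pos; lra).
    assert (0 <= rho * (PI + b - 2 * n)) by (apply Rmult_le_pos; pose proof PI2_1; lra).
    unfold L in HellL. unfold Tf, T3, T2. repeat split; lra. }
  assert (Hth1 : th' t1 = phi)
    by (unfold th'; rewrite cscc_heading_arc1, csc_segment_heading by lra; reflexivity).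
  assert (Hth3 : th' T3 = phi - s3 * b).
  { unfold th'. rewrite cscc_heading_arc2 by lra. fold th'. rewrite Hth1. unfold T3. field. lra. }
  assert (Hthf : th' Tf = phi - s3 * b + s3 * (PI + b - 2 * n)).
  { unfold th'. rewrite cscc_heading_arc3 by lra. fold th'. rewrite Hth3. unfold Tf. field. lra. }
  assert (Hx0 : x0 + arc_dx rho s1 th0 phi + (T2 - t1) * cos phi = - ell * cos phi)
    by (fold px; unfold T2; unfold qx, L in Hqx; lra).
  assert (Hy0 : y0 + arc_dy rho s1 th0 phi + (T2 - t1) * sin phi = - ell * sin phi)
    by (fold py; unfold T2; unfold qy, L in Hqy; lra).
  destruct (detour_reaches_target rho s3 phi b n Hs3 Hcb) as [Hend1 Hend2].
  fold ell in Hend1, Hend2.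
  assert (tf <= Tf).
  { refine (optimal_le_cscc rho th0 s1 (- s3) s3 t1 T2 T3 _ _ _ _ _ _ _ r x0 y0 x y th tf Tf
              Hopt _ _ _); auto; try lra;
      rewrite cscc_x_closed, cscc_y_closed by (auto; lra); fold th';
      rewrite Hth1, Hth3, Hthf, Hx0, Hy0.
    - rewrite Hr2. exact Hend1.
    - exact Hend2. }
  unfold Tf, T3, T2 in *. lra.
Qed.

Lemma csc_initial_circle_excludes_origin :
  rho <= sqrt (turn_center_x rho s1 x0 th0 ^ 2 + turn_center_y rho s1 y0 th0 ^ 2).
Proof.
  pose proof Hcsc as (_ & _ & _ & Hs1 & _).
  rewrite <- (turn_center_x_arc rho s1 x0 th0 phi), <- (turn_center_y_arc rho s1 y0 th0 phi).
  fold px py. rewrite turn_center_norm2, csc_segment_through_origin by (apply sign_sqr; exact Hs1).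
  rewrite <- (sqrt_pow2 rho) at 1 by lra. apply sqrt_le_1_alt. nra.
Qed.

Lemma csc_final_circle_tangent : r / 2 <= rho ->
  sqrt (turn_center_x rho s3 (x tf) (th tf) ^ 2 + turn_center_y rho s3 (y tf) (th tf) ^ 2) =
  r + rho.
Proof.
  intros Hbig. fold psi.
  pose proof Hcsc as (_ & _ & _ & _ & Hs3 & _). pose proof (sign_sqr s3 Hs3) as Hs3s.
  pose proof Hopt as ((_ & _ & _ & _ & _ & _ & Hend1 & Hend2) & _). fold psi in Hend2.
  pose proof (turn_center_norm2 rho s3 (x tf) (y tf) psi Hs3s) as Hfar.
  pose proof (origin_offset_sqr (x tf) (y tf) psi) as Hoff.
  rewrite Hend1 in Hfar, Hoff. rewrite Hend2 in Hoff.
  assert (Hnear : turn_center_x rho s3 (x tf) psi ^ 2 + turn_center_y rho s3 (y tf) psi ^ 2 =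
                  qx ^ 2 + qy ^ 2 + rho ^ 2).
  { destruct csc_endpoint as [Ex Ey].
    rewrite Ex, Ey, turn_center_x_arc, turn_center_y_arc, turn_center_norm2 by exact Hs3s.
    unfold qx, qy. rewrite origin_offset_segment, csc_segment_through_origin. ring. }
  set (w := origin_offset (x tf) (y tf) psi) in *.
  assert (Hw : (s3 * w + r) * (s3 * w - r) = 0).
  { transitivity ((s3 * s3) * w ^ 2 - r ^ 2); [ring |]. rewrite Hs3s. lra. }
  apply Rmult_integral in Hw. destruct Hw as [Hw | Hw].
  - rewrite Hfar. replace (r ^ 2 + rho ^ 2 - 2 * s3 * rho * w) with ((r + rho) ^ 2) by nra.
    apply sqrt_pow2. lra.
  - (* otherwise the straight segment would end at the origin, with r = 2 rho *)
    exfalso. assert (Hq : qx ^ 2 + qy ^ 2 = r * (r - 2 * rho)) by nra.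
    apply csc_no_half_turn; nra.
Qed.

End OptimalCSC.

Theorem lemma4 (rho r x0 y0 th0 : R) (x y th : R -> R) (tf t1 t2 s1 s3 : R) :
  0 < rho -> 0 < r -> 0 <= th0 <= 2 * PI ->
  optimal rho r x0 y0 th0 x y th tf ->
  is_CSC rho th0 th tf t1 t2 s1 s3 ->
  (r / 2 <= rho ->
     sqrt ((turn_center_x rho s3 (x tf) (th tf)) ^ 2 +
           (turn_center_y rho s3 (y tf) (th tf)) ^ 2) = r + rho) /\
  (rho < r / 2 ->
     rho <= sqrt ((turn_center_x rho s1 x0 th0) ^ 2 +
                  (turn_center_y rho s1 y0 th0) ^ 2)).
Proof.
  intros Hrho Hr _ Hopt Hcsc. split.
  - intros Hbig. exact (csc_final_circle_tangent rho r x0 y0 th0 x y th tf t1 t2 s1 s3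
                          Hrho Hr Hopt Hcsc Hbig).
  - intros _. exact (csc_initial_circle_excludes_origin rho r x0 y0 th0 x y th tf t1 t2 s1 s3
                       Hrho Hopt Hcsc).
Qed.
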